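(* Let $\omega\ge 3$ be an integer, let $\varepsilon>0$ and $c>0$ be real constants, and let $k\ge 1$. Let $G$ be a graph with $m$ edges, clique number $\omega(G)=\omega$, and $t(G)\le c\,m^{1.5-\varepsilon}$. If $m\ge \big(2.2\,c\,\omega^{2k}\big)^{1/\varepsilon}$, then \[\Lambda_\ell(G) < 2\left(\frac{\sqrt[3]{\omega}}{1+\sqrt[3]{\omega}}+\frac{1}{\omega^{k}}\right),\] where $\ell=\min\{n^+,\omega\}$.
   Context: For a simple graph $G$ on $n$ vertices and $m$ edges, let $\lambda_1\ge\lambda_2\ge\cdots\ge\lambda_n$ be the eigenvalues of its adjacency matrix $A(G)$. The inertia $(n^+,n^0,n^-)$ means $G$ has $n^+$ positive eigenvalues, eigenvalue $0$ with multiplicity $n^0$, and $n^-$ negative eigenvalues. $\omega(G)$ is the clique number and $t(G)$ the number of triangles of $G$. Define $s_k(G)=\sum_{i=1}^k\lambda_i^2$ and $\Lambda_k(G)=s_k(G)/m$. *)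

From HB Require Import structures.
From mathcomp Require Import all_boot all_order all_algebra.
From mathcomp Require Import all_classical all_reals exp.
Set Implicit Arguments. Unset Strict Implicit. Unset Printing Implicit Defensive.
Import Order.TTheory GRing.Theory Num.Theory.
Local Open Scope ring_scope.

Definition simple_graph (n : nat) (adj : rel 'I_n) : Prop :=
  symmetric adj /\ irreflexive adj.

Definition adj_mx (R : nzRingType) (n : nat) (adj : rel 'I_n) : 'M[R]_n :=
  \matrix_(i, j) (adj i j)%:R.

Definition edges (n : nat) (adj : rel 'I_n) : {set {set 'I_n}} :=
  [set e : {set 'I_n} | [exists x, exists y, adj x y && (e == [set x; y])]].

Definition num_edges (n : nat) (adj : rel 'I_n) : nat := #|edges adj|.

Definition is_clique (n : nat) (adj : rel 'I_n) (S : {set 'I_n}) : bool :=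
  [forall x in S, forall y in S, (x != y) ==> adj x y].

Definition clique_number (n : nat) (adj : rel 'I_n) : nat :=
  \max_(S : {set 'I_n} | is_clique adj S) #|S|.

Definition num_triangles (n : nat) (adj : rel 'I_n) : nat :=
  #|[set S : {set 'I_n} | is_clique adj S && (#|S| == 3%N)]|.

Definition sorted_eigenvalues (R : realType) (n : nat) (A : 'M[R]_n)
  (lam : seq R) : Prop :=
  char_poly A = \prod_(x <- lam) ('X - x%:P) /\ sorted (>=%R) lam.

Definition n_pos (R : realType) (lam : seq R) : nat := count (fun x => 0 < x) lam.

Definition s_k (R : realType) (lam : seq R) (k : nat) : R :=
  \sum_(x <- take k lam) x ^+ 2.

Definition Lambda_k (R : realType) (lam : seq R) (m k : nat) : R :=
  s_k lam k / m%:R.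

From HB Require Import structures.
From mathcomp Require Import all_boot all_order all_algebra.
From mathcomp Require Import all_classical all_reals exp.
From mathcomp Require Import complex spectral.
From mathcomp Require Import ring lra zify.
Import Order.TTheory GRing.Theory Num.Theory.
Local Open Scope ring_scope.
Set Implicit Arguments. Unset Strict Implicit. Unset Printing Implicit Defensive.

(* Let A be the adjacency matrix, m the number of edges, t the number of
   triangles and S = s_l(G).  Since tr A^2 = 2m and tr A^3 = 6t, the squared
   eigenvalues sum to at most 2m and the cubed ones to at most 6t.  The l
   largest eigenvalues are positive and l <= w, so by the power-mean inequality
   their cubes sum to at least S^(3/2)/sqrt w, while the cubes of the other
   eigenvalues sum to at least -(2m - S)^(3/2).  Hence
     S^(3/2) - sqrt w (2m - S)^(3/2) <= 6 sqrt w c m^(3/2 - eps).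
   With a = w^(1/3), the left side vanishes at S = 2m a/(1+a) and, by convexity
   of x^(3/2), grows at least like (3/2) sqrt m (S - 2m a/(1+a)) beyond it.  So
   S >= 2m (a/(1+a) + w^-k) would give m^eps <= 2c w^(2k), contradicting the
   lower bound on m. *)

Section SqrtInequalities.
Variable R : rcfType.
Implicit Types (a c d l x y u v K M Me S : R) (s : seq R).

Lemma cube_tangent_ge u v : 0 <= u -> 0 <= v ->
  3 / 2 * v * (u ^+ 2 - v ^+ 2) <= u ^+ 3 - v ^+ 3.
Proof.
move=> u_ge0 v_ge0.
have : 0 <= (u - v) ^+ 2 * (u + v / 2) by apply: mulr_ge0; [exact: sqr_ge0 | lra].
nra.
Qed.

Lemma mul_sqrt_tangent_ge x y : 0 <= x -> 0 <= y ->
  3 / 2 * Num.sqrt y * (x - y) <= x * Num.sqrt x - y * Num.sqrt y.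
Proof.
move=> x_ge0 y_ge0; have := cube_tangent_ge (sqrtr_ge0 x) (sqrtr_ge0 y).
by rewrite !(exprS _ 2) !sqr_sqrtr // (mulrC (Num.sqrt x)) (mulrC (Num.sqrt y)).
Qed.

Lemma ler_mul_sqrt x y : 0 <= x -> x <= y -> x * Num.sqrt x <= y * Num.sqrt y.
Proof. by move=> x_ge0 xy; rewrite ler_pM ?sqrtr_ge0 ?ler_wsqrtr. Qed.

Lemma cube_gap_ge a M d S : 1 <= a -> 0 < M -> 0 <= d ->
  2 * M * (a / (1 + a) + d) <= S -> S <= 2 * M ->
  3 * d * M * Num.sqrt M <=
    S * Num.sqrt S - Num.sqrt (a ^+ 3) * ((2 * M - S) * Num.sqrt (2 * M - S)).
Proof.
move=> a_ge1 M_gt0 d_ge0 S_ge S_le.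
have a1_gt0 : 0 < 1 + a by lra.
set S1 := 2 * M / (1 + a); set S0 := a * S1.
have S0E : S0 = 2 * M * (a / (1 + a)) by rewrite /S0 /S1; field; lra.
have S1E : S1 = 2 * M - S0 by rewrite S0E /S1; field; lra.
have S1_ge0 : 0 <= S1 by rewrite /S1 divr_ge0 //; lra.
have M_le_S0 : M <= S0.
  rewrite S0E -subr_ge0 (_ : _ - M = M * (a - 1) / (1 + a)); last by field; lra.
  by rewrite divr_ge0 ?mulr_ge0; lra.
(* S0 = 2M a/(1+a) is where both sides balance: S0^(3/2) = a^(3/2) (2M - S0)^(3/2). *)
have balance : S0 * Num.sqrt S0 = Num.sqrt (a ^+ 3) * (S1 * Num.sqrt S1).
  rewrite /S0 sqrtrM ?(le_trans ler01 a_ge1) // exprSr sqrtrM ?sqr_ge0 //.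
  by rewrite sqrtr_sqr ger0_norm; [ring | lra].
have tangent : 3 / 2 * Num.sqrt S0 * (S - S0) <= S * Num.sqrt S - S0 * Num.sqrt S0.
  by apply: mul_sqrt_tangent_ge; rewrite S0E in M_le_S0 *; nra.
have excess : 2 * M * d <= S - S0 by rewrite S0E; lra.
have gain : 3 * d * M * Num.sqrt M <= 3 / 2 * Num.sqrt S0 * (S - S0).
  rewrite (_ : 3 * d * M * _ = 3 / 2 * Num.sqrt M * (2 * M * d)); last by field.
  have sqrt_le : 3 / 2 * Num.sqrt M <= 3 / 2 * Num.sqrt S0.
    by rewrite ler_pM2l ?ler_wsqrtr //; lra.
  by apply: ler_pM => //; rewrite !mulr_ge0 ?sqrtr_ge0 //; lra.
have loss : (2 * M - S) * Num.sqrt (2 * M - S) <= S1 * Num.sqrt S1.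
  have Md_ge0 : 0 <= 2 * M * d by rewrite !mulr_ge0 //; lra.
  by apply: ler_mul_sqrt; lra.
have := ler_wpM2l (sqrtr_ge0 (a ^+ 3)) loss.
lra.
Qed.

Lemma sqrtr_le_id x : 1 <= x -> Num.sqrt x <= x.
Proof.
move=> x_ge1; have := sqr_sqrtr (le_trans ler01 x_ge1); have := sqrtr_ge0 x.
set s := Num.sqrt x; nra.
Qed.

Lemma share_lt_of_cube_gap a K M Me c l S :
  1 <= a -> a ^+ 3 <= K -> 0 < M -> 0 < c -> 22 / 10 * c * K ^+ 2 <= Me ->
  0 < l -> l <= a ^+ 3 -> 0 <= S -> S <= 2 * M ->
  S * Num.sqrt S / Num.sqrt l - (2 * M - S) * Num.sqrt (2 * M - S) <=
    6 * c * (M * Num.sqrt M / Me) ->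
  S / M < 2 * (a / (1 + a) + K^-1).
Proof.
move=> a_ge1 a3_le_K M_gt0 c_gt0 Me_ge l_gt0 l_le S_ge0 S_le gap_le.
rewrite ltNge; apply/negP => S_large.
have a3_ge1 : 1 <= a ^+ 3 by rewrite exprn_ege1.
have K_gt0 : 0 < K by lra.
have Me_gt0 : 0 < Me by have := mulr_gt0 c_gt0 (exprn_gt0 2 K_gt0); lra.
set W := Num.sqrt (a ^+ 3).
have W_gt0 : 0 < W by rewrite sqrtr_gt0; lra.
have W_le_K : W <= K by apply: le_trans a3_le_K; exact: sqrtr_le_id.
have sqrt_l_le : Num.sqrt l <= W by rewrite ler_wsqrtr.
have sqrt_l_gt0 : 0 < Num.sqrt l by rewrite sqrtr_gt0.
have q_gt0 : 0 < M * Num.sqrt M by rewrite mulr_gt0 ?sqrtr_gt0.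
have S_ge : 2 * M * (a / (1 + a) + K^-1) <= S.
  by move: S_large; rewrite ler_pdivlMr // mulrAC.
have Kinv_ge0 : 0 <= K^-1 by rewrite invr_ge0 ltW.
have lower := cube_gap_ge a_ge1 M_gt0 Kinv_ge0 S_ge S_le.
have upper : S * Num.sqrt S - W * ((2 * M - S) * Num.sqrt (2 * M - S)) <=
             W * (6 * c * (M * Num.sqrt M / Me)).
  have SS_ge0 : 0 <= S * Num.sqrt S by rewrite mulr_ge0 ?sqrtr_ge0.
  have SS_le : S * Num.sqrt S / W <= S * Num.sqrt S / Num.sqrt l.
    by rewrite ler_wpM2l // lef_pV2 ?posrE.
  have := ler_wpM2l (ltW W_gt0) (le_trans (lerB SS_le (lexx _)) gap_le).
  by rewrite mulrBr [W * (_ / W)]mulrC divfK ?gt_eqF.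
have : 3 * Me * (M * Num.sqrt M) <= 6 * c * W * K * (M * Num.sqrt M).
  have := ler_wpM2l (ltW (mulr_gt0 K_gt0 Me_gt0)) (le_trans lower upper).
  rewrite (_ : K * Me * _ = 3 * Me * (M * Num.sqrt M)); last by field; rewrite gt_eqF.
  rewrite (_ : K * Me * _ = 6 * c * W * K * (M * Num.sqrt M)) //.
  by field; rewrite gt_eqF.
rewrite ler_pM2r // => Me_le.
have : c * W * K <= c * K ^+ 2 by rewrite expr2 mulrA ler_pM2r ?ler_pM2l.
lra.
Qed.

Lemma sum_sqr_mean_le_sum_cube s : all (>= 0) s -> (0 < size s)%N ->
  (\sum_(x <- s) x ^+ 2) * Num.sqrt ((\sum_(x <- s) x ^+ 2) / (size s)%:R)
    <= \sum_(x <- s) x ^+ 3.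
Proof.
move=> /allP s_ge0 size_gt0.
set S := \sum_(x <- s) x ^+ 2; set mu := Num.sqrt _.
have size_gt0' : 0 < (size s)%:R :> R by rewrite ltr0n.
have S_ge0 : 0 <= S by rewrite sumr_ge0 // => x _; exact: sqr_ge0.
have mu_ge0 : 0 <= mu := sqrtr_ge0 _.
have muE : mu ^+ 2 * (size s)%:R = S.
  by rewrite sqr_sqrtr ?divr_ge0 // divfK ?gt_eqF.
have tangent x : x \in s -> 3 / 2 * mu * x ^+ 2 - 1 / 2 * mu ^+ 3 <= x ^+ 3.
  by move=> /s_ge0 x_ge0; have := cube_tangent_ge x_ge0 mu_ge0; lra.
have := ler_sum s tangent; rewrite -!big_seq sumrB -mulr_sumr big_const_seq.
rewrite count_predT iter_addr_0 -/S -[_ *+ size s]mulr_natr.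
have : mu ^+ 3 * (size s)%:R = mu * S by rewrite -muE exprS mulrA.
lra.
Qed.

Lemma sum_cube_ge s :
  - ((\sum_(x <- s) x ^+ 2) * Num.sqrt (\sum_(x <- s) x ^+ 2)) <= \sum_(x <- s) x ^+ 3.
Proof.
set Q := \sum_(x <- s) x ^+ 2.
have x_le x : x \in s -> `|x| <= Num.sqrt Q.
  move=> x_s; rewrite -sqrtr_sqr ler_wsqrtr // /Q (big_rem x x_s) /= lerDl.
  by rewrite sumr_ge0 // => y _; exact: sqr_ge0.
rewrite mulrC {2}/Q mulr_sumr -sumrN big_seq [leRHS]big_seq.
apply: ler_sum => x /x_le x_le_Q.
have x_ge : - `|x| <= x by rewrite lerNl -normrN ler_norm.
have x2_ge0 := sqr_ge0 x.
have : 0 <= (x + `|x|) * x ^+ 2 by rewrite mulr_ge0 // -lerBlDr sub0r.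
have : 0 <= (Num.sqrt Q - `|x|) * x ^+ 2 by rewrite mulr_ge0 // subr_ge0.
nra.
Qed.

End SqrtInequalities.

Section PowR.
Variable R : realType.
Implicit Types x y e : R.

Lemma powRVn_exprn x p : 0 <= x -> (0 < p)%N -> powR x p%:R^-1 ^+ p = x.
Proof.
move=> x_ge0 p_gt0.
by rewrite -powR_mulrn ?powR_ge0 // -powRrM mulVf ?powRr1 ?pnatr_eq0 -?lt0n.
Qed.

Lemma powRV_le_powR x y e : 0 <= x -> 0 < e -> powR x e^-1 <= y -> x <= powR y e.
Proof.
move=> x_ge0 e_gt0 le_y.
have := ge0_ler_powR (ltW e_gt0) _ _ le_y.
rewrite -powRrM mulVf ?gt_eqF // powRr1 //.
by apply; rewrite nnegrE ?powR_ge0 // (le_trans (powR_ge0 _ _) le_y).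
Qed.

Lemma powR_3half_sub x e : 0 < x -> powR x (3 / 2 - e) = x * Num.sqrt x / powR x e.
Proof.
move=> x_gt0; have x_neq0 : x != 0 by rewrite gt_eqF.
rewrite powRB ?x_neq0 ?implybT // (_ : 3 / 2 = 1 + 2^-1); last by field.
by rewrite powRD ?x_neq0 ?implybT // powRr1 ?powR12_sqrt ?ltW.
Qed.

End PowR.

Lemma char_poly_invmx_conj (F : fieldType) n (P D : 'M[F]_n) : P \in unitmx ->
  char_poly (invmx P *m D *m P) = char_poly D.
Proof.
move=> P_unit; rewrite /char_poly.
have -> : char_poly_mx (invmx P *m D *m P) =
    map_mx polyC (invmx P) *m char_poly_mx D *m map_mx polyC P.
  rewrite /char_poly_mx mulmxBr mulmxBl !map_mxM; congr (_ - _).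
  by rewrite mul_mx_scalar -scalemxAl -map_mxM mulVmx // map_mx1 scalemx1.
rewrite !det_mulmx mulrC mulrA -det_mulmx -map_mxM mulmxV //.
by rewrite map_mx1 det1 mul1r.
Qed.

Lemma exp_invmx_conj (R : comUnitRingType) n (P D : 'M[R]_n) p : P \in unitmx ->
  (invmx P *m D *m P) ^+ p = invmx P *m D ^+ p *m P.
Proof.
move=> P_unit; elim: p => [|p IHp]; first by rewrite !expr0 mulmx1 mulVmx.
by rewrite !exprS IHp -!mulmxE !mulmxA mulmxK.
Qed.

Lemma exp_diag_mx (R : pzSemiRingType) n (d : 'rV[R]_n) p :
  diag_mx d ^+ p = diag_mx (map_mx (fun x => x ^+ p) d).
Proof.
elim: p => [|p IHp].
  by apply/matrixP => i j; rewrite expr0 !mxE; case: eqP; rewrite ?mulr1n ?mulr0n.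
rewrite exprS IHp -mulmxE mulmx_diag.
by apply/matrixP => i j; rewrite !mxE; case: eqP; rewrite ?mulr1n ?mulr0n // exprS.
Qed.

Lemma mxtrace_exp_sym (R : realType) n (A : 'M[R]_n) (lam : seq R) p :
  A^T = A -> char_poly A = \prod_(x <- lam) ('X - x%:P) ->
  \tr (A ^+ p) = \sum_(x <- lam) x ^+ p.
Proof.
move=> A_sym charA.
pose f := real_complex R; pose Ac := map_mx f A.
have Ac_sym : Ac \is symmetricmx.
  by apply/is_hermitianmxP; rewrite expr0 scale1r map_mx_id // /Ac map_trmx A_sym.
have Ac_real : Ac \is a realmx.
  by apply/mxOverP => i j; rewrite mxE; apply/complex_realP; eexists.
have /orthomx_spectralP AcE := symmetric_normalmx Ac_sym Ac_real.
set P := spectralmx Ac in AcE; set d := spectral_diag Ac in AcE.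
have P_unit : P \in unitmx := spectral_unit Ac.
have char_map : char_poly Ac = \prod_(x <- map f lam) ('X - x%:P).
  rewrite -map_char_poly charA rmorph_prod big_map; apply: eq_bigr => x _.
  by rewrite rmorphB /= map_polyX map_polyC.
have char_diag : char_poly Ac = \prod_(j < n) ('X - (d 0 j)%:P).
  rewrite AcE char_poly_invmx_conj // char_poly_trig ?diag_mx_is_trig //.
  by apply: eq_bigr => j _; rewrite mxE eqxx mulr1n.
have eigen_perm : perm_eq (map f lam) [seq d 0 j | j <- enum 'I_n].
  by apply: prod_XsubC_eq; rewrite -char_map char_diag big_map big_enum.
have map_mxX q : map_mx f (A ^+ q) = Ac ^+ q.
  elim: q => [|q IHq]; first by rewrite !expr0 map_mx1.
  by rewrite !exprS -!mulmxE map_mxM IHq.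
apply: (@complexI R); rewrite -trace_map_mx -/f map_mxX AcE exp_invmx_conj //.
rewrite mxtrace_mulC mulmxA mulmxV // mul1mx exp_diag_mx mxtrace_diag.
rewrite /f rmorph_sum; under [RHS]eq_bigr => x _ do rewrite rmorphXn.
rewrite -(big_map _ predT (fun y => y ^+ p)) (perm_big _ eigen_perm) big_map big_enum /=.
by apply: eq_bigr => j _; rewrite mxE.
Qed.

Lemma card_set_sum (T : finType) (P : pred T) : #|[set x | P x]| = (\sum_x P x)%N.
Proof.
by rewrite -sum1_card big_mkcond; apply: eq_bigr => x _; rewrite inE; case: (P x).
Qed.

Section SymmetricCounts.
Variable n : nat.

Lemma card_sym_pairs (P : rel 'I_n) : symmetric P -> irreflexive P ->
  #|[set p : 'I_n * 'I_n | P p.1 p.2]| =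
    (2 * #|[set p : 'I_n * 'I_n | (p.1 < p.2)%N && P p.1 p.2]|)%N.
Proof.
move=> P_sym P_irr.
have swap_inj : injective (fun p : 'I_n * 'I_n => (p.2, p.1)) by move=> [? ?] [? ?] [-> ->].
rewrite !card_set_sum mul2n -addnn [X in (_ + X)%N](reindex_inj swap_inj) -big_split /=.
apply: eq_bigr => -[i j] _ /=; rewrite (P_sym j i).
by case: ltngtP => [||/val_inj->]; rewrite ?P_irr ?andbF ?addn0.
Qed.

Lemma card_sym_triples (P : 'I_n -> 'I_n -> 'I_n -> bool) :
  (forall i j k, P i j k = P j i k) -> (forall i j k, P i j k = P i k j) ->
  (forall i j k, P i j k -> [&& i != j, j != k & i != k]) ->
  #|[set p : 'I_n * ('I_n * 'I_n) | P p.1 p.2.1 p.2.2]| =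
    (6 * #|[set p : 'I_n * ('I_n * 'I_n) |
              [&& (p.1 < p.2.1)%N, (p.2.1 < p.2.2)%N & P p.1 p.2.1 p.2.2]]|)%N.
Proof.
move=> P12 P23 P_neq.
pose Q (p : 'I_n * ('I_n * 'I_n)) :=
  [&& (p.1 < p.2.1)%N, (p.2.1 < p.2.2)%N & P p.1 p.2.1 p.2.2].
have QE i j k : P i j k = (Q (i, (j, k)) + Q (i, (k, j)) + Q (j, (i, k)) +
                           Q (j, (k, i)) + Q (k, (i, j)) + Q (k, (j, i)))%N :> nat.
  (* exactly one of the six rearrangements of three distinct indices is increasing *)
  rewrite /Q /= -P23 -P12 -(P23 j) -P12 -(P12 k) -P23 -P12.
  case Pjki : (P j k i); last by rewrite !andbF.
  have /and3P[] := P_neq _ _ _ Pjki; rewrite -!val_eqE /= !andbT.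
  by case: (ltngtP i j); case: (ltngtP j k); case: (ltngtP i k); lia.
have reindex (s : 'I_n * ('I_n * 'I_n) -> 'I_n * ('I_n * 'I_n)) :
    injective s -> (\sum_p Q (s p) = \sum_p Q p)%N.
  by move=> s_inj; rewrite [RHS](reindex_inj s_inj).
rewrite !card_set_sum (eq_bigr _ (fun p _ => QE p.1 p.2.1 p.2.2)) !big_split /=.
rewrite !reindex; try by move=> [? [? ?]] [? [? ?]] [-> -> ->].
lia.
Qed.

End SymmetricCounts.

Definition triangleb n (adj : rel 'I_n) (i j k : 'I_n) := [&& adj i j, adj j k & adj k i].

Section AdjacencyTraces.
Variables (n : nat) (adj : rel 'I_n).
Hypothesis adj_simple : simple_graph adj.

Lemma card_ltn_adj_le_edges :
  (#|[set p : 'I_n * 'I_n | (p.1 < p.2)%N && adj p.1 p.2]| <= num_edges adj)%N.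
Proof.
set L := [set p : 'I_n * 'I_n | _].
have inj : {in L &, injective (fun p : 'I_n * 'I_n => [set p.1; p.2])}.
  move=> [a b] [c d]; rewrite !inE /= => /andP[ab _] /andP[cd _] E.
  have : (a \in [set c; d]) && (b \in [set c; d]) by rewrite -E set21 set22.
  have : (c \in [set a; b]) && (d \in [set a; b]) by rewrite E set21 set22.
  rewrite !in_set2 -!val_eqE /= => /andP[h1 h2] /andP[h3 h4].
  by apply/eqP; rewrite xpair_eqE -!val_eqE /=; lia.
rewrite /num_edges -(card_in_imset inj); apply: subset_leq_card.
apply/fintype.subsetP => e /imsetP [[a b]]; rewrite inE /= => /andP[_ ab] ->.
by rewrite inE; apply/existsP; exists a; apply/existsP; exists b; rewrite ab eqxx.
Qed.

Lemma card_ltn_triangles_le :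
  (#|[set p : 'I_n * ('I_n * 'I_n) | [&& (p.1 < p.2.1)%N, (p.2.1 < p.2.2)%N &
                                       triangleb adj p.1 p.2.1 p.2.2]]|
     <= num_triangles adj)%N.
Proof.
have [adj_sym adj_irr] := adj_simple.
set L := [set p | _].
pose f (p : 'I_n * ('I_n * 'I_n)) := [set p.1; p.2.1; p.2.2].
have inj : {in L &, injective f}.
  move=> [a [b c]] [a' [b' c']]; rewrite !inE /= => /and3P[ab bc _] /and3P[ab' bc' _] E.
  have : [&& a \in f (a', (b', c')), b \in f (a', (b', c')) & c \in f (a', (b', c'))].
    by rewrite -E /f !inE !eqxx !orbT.
  have : [&& a' \in f (a, (b, c)), b' \in f (a, (b, c)) & c' \in f (a, (b, c))].
    by rewrite E /f !inE !eqxx !orbT.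
  rewrite /f !inE -!val_eqE /= => /and3P[h1 h2 h3] /and3P[h4 h5 h6].
  by apply/eqP; rewrite !xpair_eqE -!val_eqE /=; lia.
rewrite /num_triangles -(card_in_imset inj); apply: subset_leq_card.
apply/fintype.subsetP => S /imsetP [[a [b c]]]; rewrite inE /=.
move=> /and3P[ab bc /and3P[adj_ab adj_bc adj_ca]] ->; rewrite inE /f /=.
apply/andP; split.
  apply/forallP => x; apply/implyP => xS; apply/forallP => y; apply/implyP => yS.
  apply/implyP; move: xS yS; rewrite !inE -!orbA => /or3P[]/eqP-> /or3P[]/eqP->;
    by rewrite ?eqxx // adj_sym ?adj_ab ?adj_bc ?adj_ca // adj_sym ?adj_ab ?adj_bc ?adj_ca.
rewrite finset.setUC cardsU1 cards2 !inE negb_or -!val_eqE /=.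
by rewrite !neq_ltn ab bc (ltn_trans ab bc) !orbT.
Qed.

Lemma mxtrace_adj_mx_sqr (R : nzRingType) :
  \tr (adj_mx R adj ^+ 2) = #|[set p : 'I_n * 'I_n | adj p.1 p.2]|%:R.
Proof.
have [adj_sym _] := adj_simple.
rewrite card_set_sum -(pair_bigA _ (fun i j => adj i j : nat)) natr_sum.
apply: eq_bigr => i _; rewrite expr2 -mulmxE !mxE natr_sum; apply: eq_bigr => j _.
by rewrite !mxE (adj_sym j i); case: (adj i j); rewrite ?mulr1 ?mulr0.
Qed.

Lemma mxtrace_adj_mx_cube (R : nzRingType) :
  \tr (adj_mx R adj ^+ 3) =
    #|[set p : 'I_n * ('I_n * 'I_n) | triangleb adj p.1 p.2.1 p.2.2]|%:R.
Proof.
rewrite card_set_sum -(pair_bigA _ (fun i q => triangleb adj i q.1 q.2 : nat)) natr_sum.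
apply: eq_bigr => i _; rewrite -(pair_bigA _ (fun j k => triangleb adj i j k : nat)).
rewrite exprS expr2 -!mulmxE !mxE natr_sum; apply: eq_bigr => j _.
rewrite !mxE natr_sum mulr_sumr; apply: eq_bigr => k _.
by rewrite !mxE /triangleb; case: (adj i j); case: (adj j k); case: (adj k i);
  rewrite ?mulr1 ?mulr0 ?mul0r.
Qed.

Lemma mxtrace_adj_mx_sqr_le (R : numDomainType) :
  \tr (adj_mx R adj ^+ 2) <= 2 * (num_edges adj)%:R.
Proof.
have [adj_sym adj_irr] := adj_simple.
rewrite mxtrace_adj_mx_sqr card_sym_pairs // natrM ler_pM2l // ler_nat.
exact: card_ltn_adj_le_edges.
Qed.

Lemma mxtrace_adj_mx_cube_le (R : numDomainType) :
  \tr (adj_mx R adj ^+ 3) <= 6 * (num_triangles adj)%:R.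
Proof.
have [adj_sym adj_irr] := adj_simple.
have adj_neq x y : adj x y -> x != y.
  by move=> adj_xy; apply: contraTneq adj_xy => ->; rewrite adj_irr.
rewrite mxtrace_adj_mx_cube card_sym_triples; first last.
- move=> i j k /and3P[/adj_neq -> /adj_neq -> /adj_neq]; by rewrite eq_sym.
- move=> i j k; rewrite /triangleb (adj_sym i k) (adj_sym k j) (adj_sym j i).
  by case: (adj i j); case: (adj j k); case: (adj k i).
- move=> i j k; rewrite /triangleb (adj_sym j i) (adj_sym i k) (adj_sym k j).
  by case: (adj i j); case: (adj j k); case: (adj k i).
by rewrite natrM ler_pM2l // ler_nat card_ltn_triangles_le.
Qed.

End AdjacencyTraces.

Lemma sorted_take_count_gt0 (R : realDomainType) (s : seq R) : sorted >=%R s ->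
  all (> 0) (take (count (> 0) s) s).
Proof.
elim: s => [//|x s IHs] /= x_path.
have [x_gt0|x_le0] := boolP (0 < x); first by rewrite /= x_gt0 IHs ?(path_sorted x_path).
have le_x : all (>=%R x) s by apply: order_path_min x_path; apply: rev_trans le_trans.
rewrite add0n (@eq_in_count _ _ pred0) ?count_pred0 // => y /(allP le_x) y_le.
by apply/negbTE; rewrite -leNgt (le_trans y_le) // leNgt.
Qed.

Section EigenvalueBounds.
Variables (R : realType) (n : nat) (adj : rel 'I_n) (lam : seq R).
Hypotheses (adj_simple : simple_graph adj)
           (lam_eig : sorted_eigenvalues (adj_mx R adj) lam).
Local Notation m := ((num_edges adj)%:R : R).
Local Notation t := ((num_triangles adj)%:R : R).

Lemma sum_eigen_exp p : \sum_(x <- lam) x ^+ p = \tr (adj_mx R adj ^+ p).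
Proof.
have [adj_sym _] := adj_simple; have [charA _] := lam_eig.
apply/esym/mxtrace_exp_sym => //.
by apply/matrixP => i j; rewrite !mxE adj_sym.
Qed.

Lemma s_k_split l :
  s_k lam l + \sum_(x <- drop l lam) x ^+ 2 <= 2 * m.
Proof.
by rewrite /s_k -big_cat cat_take_drop sum_eigen_exp mxtrace_adj_mx_sqr_le.
Qed.

Lemma s_k_le_twice_edges l : s_k lam l <= 2 * m.
Proof.
apply: le_trans (s_k_split l); rewrite lerDl.
by rewrite sumr_ge0 // => x _; exact: sqr_ge0.
Qed.

Lemma s_k_cube_gap_le l : (0 < l <= n_pos lam)%N ->
  s_k lam l * Num.sqrt (s_k lam l) / Num.sqrt l%:R
    - (2 * m - s_k lam l) * Num.sqrt (2 * m - s_k lam l) <= 6 * t.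
Proof.
move=> /andP[l_gt0 l_le]; set S := s_k lam l.
set Q := \sum_(x <- drop l lam) x ^+ 2.
have S_ge0 : 0 <= S by rewrite sumr_ge0 // => x _; exact: sqr_ge0.
have SQ_le : S + Q <= 2 * m := s_k_split l.
have size_take : size (take l lam) = l.
  by rewrite size_takel // (leq_trans l_le) ?count_size.
have take_ge0 : all (>= 0) (take l lam).
  have := sorted_take_count_gt0 lam_eig.2; rewrite -/(n_pos lam) -(take_takel _ l_le).
  by move=> /allP pos; apply/allP => x /mem_take /pos /ltW.
have top : S * Num.sqrt S / Num.sqrt l%:R <= \sum_(x <- take l lam) x ^+ 3.
  have := sum_sqr_mean_le_sum_cube take_ge0; rewrite size_take => /(_ l_gt0).
  by rewrite sqrtrM // sqrtrV // mulrA.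
have rest := sum_cube_ge (drop l lam); rewrite -/Q in rest.
have rest' : Q * Num.sqrt Q <= (2 * m - S) * Num.sqrt (2 * m - S).
  by apply: ler_mul_sqrt; [rewrite sumr_ge0 // => x _; exact: sqr_ge0 | lra].
have := mxtrace_adj_mx_cube_le adj_simple R.
rewrite -sum_eigen_exp -(cat_take_drop l lam) big_cat /=.
lra.
Qed.

End EigenvalueBounds.

Theorem theorem1p4 (R : realType) (w : nat) (eps c k : R)
  (n : nat) (adj : rel 'I_n) (lam : seq R) :
  (3 <= w)%N -> 0 < eps -> 0 < c -> 1 <= k ->
  simple_graph adj ->
  clique_number adj = w ->
  (num_triangles adj)%:R <= c * powR (num_edges adj)%:R (3 / 2 - eps) ->
  powR (22 / 10 * c * powR w%:R (2 * k)) (eps^-1) <= (num_edges adj)%:R ->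
  sorted_eigenvalues (adj_mx R adj) lam ->
  Lambda_k lam (num_edges adj) (minn (n_pos lam) w)
    < 2 * (powR w%:R (3^-1) / (1 + powR w%:R (3^-1)) + (powR w%:R k)^-1).
Proof.
(* The clique number is used only through l <= w. *)
move=> w_ge3 eps_gt0 c_gt0 k_ge1 adj_simple _ triangles_le edges_ge lam_eig.
set m : R := (num_edges adj)%:R; set l := minn (n_pos lam) w.
set a := powR w%:R 3^-1; set K := powR w%:R k.
have w_ge1 : 1 <= w%:R :> R by rewrite ler1n; lia.
have a3 : a ^+ 3 = w%:R by apply: powRVn_exprn.
have a_ge1 : 1 <= a by rewrite -(powRr0 w%:R) ler_powR // invr_ge0.
have K_gt0 : 0 < K by rewrite powR_gt0 //; lra.
have B_gt0 : 0 < 22 / 10 * c * K ^+ 2 by apply: mulr_gt0; [lra | exact: exprn_gt0].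
have K2E : K ^+ 2 = powR w%:R (2 * k).
  by rewrite mulrC powRrM -powR_mulrn ?powR_ge0.
have m_ge : 22 / 10 * c * K ^+ 2 <= powR m eps.
  by apply: powRV_le_powR (ltW B_gt0) eps_gt0 _; rewrite K2E.
have m_gt0 : 0 < m := gt0_powR eps_gt0 (ler0n _ _) (lt_le_trans B_gt0 m_ge).
have [l0 | l_gt0] := posnP l.
  rewrite /Lambda_k /s_k l0 take0 big_nil mul0r.
  by apply: mulr_gt0; [|apply: addr_gt0; [apply: divr_gt0 | rewrite invr_gt0]]; lra.
have gap := s_k_cube_gap_le adj_simple lam_eig (introT andP (conj l_gt0 (geq_minl _ _))).
apply: (share_lt_of_cube_gap a_ge1 _ m_gt0 c_gt0 m_ge _ _ _
          (s_k_le_twice_edges adj_simple lam_eig l) (le_trans gap _)).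
- by rewrite a3 le1r_powR.
- by rewrite ltr0n.
- by rewrite a3 ler_nat geq_minr.
- by rewrite sumr_ge0 // => x _; exact: sqr_ge0.
- by rewrite -powR_3half_sub //; lra.
Qed.
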